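(* Let $A\in\mathbb{R}^{n\times n}$ be a symmetric irreducible invertible $M$-matrix. Let $u\in\mathbb{R}^n$ be a nonzero vector with $u\le 0$ (entrywise), and set $\alpha=u^TA^{-1}u$. Then the $(n+1)\times(n+1)$ matrix $B=\begin{pmatrix}A & u\\ u^T & \alpha\end{pmatrix}$ is a $P_{\#}$-matrix.
   Context: A $Z$-matrix is a real square matrix with nonpositive off-diagonal entries. An $M$-matrix is a matrix of the form $sI-C$ with $C\ge 0$ entrywise and $s\ge\rho(C)$ (spectral radius); it is invertible iff $s>\rho(C)$. $A$ is reducible if it is permutationally similar to $\begin{pmatrix}B&0\\C&D\end{pmatrix}$ with $B,D$ square (or $n=1$ and $A=0$), irreducible otherwise. A matrix $M$ is a $P_{\#}$-matrix if: $x\in R(M)$ (range of $M$) and $x_i(Mx)_i\le 0$ for all $i$ imply $x=0$. *)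

From HB Require Import structures.
From mathcomp Require Import all_boot all_order all_algebra all_fingroup.
From mathcomp Require Import complex.
Set Implicit Arguments. Unset Strict Implicit. Unset Printing Implicit Defensive.
Import Order.TTheory GRing.Theory Num.Theory.
Local Open Scope ring_scope.

Definition Zmatrix (R : realFieldType) n (A : 'M[R]_n) : Prop :=
  forall i j : 'I_n, i != j -> A i j <= 0.

Definition nonneg_mx (R : realFieldType) m n (C : 'M[R]_(m, n)) : Prop :=
  forall i j, 0 <= C i j.

(* the complex eigenvalues of a real square matrix: roots of its
   characteristic polynomial viewed over complex R *)
Definition ceigen (R : rcfType) n (C : 'M[R]_n) (z : complex R) : Prop :=
  root (map_poly (fun x : R => (x%:C)%C) (char_poly C)) z.

Definition spec_rad_lt (R : rcfType) n (C : 'M[R]_n) (s : R) : Prop :=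
  forall z : complex R, ceigen C z -> `|z| < (s%:C)%C.

Definition invertible_Mmatrix (R : rcfType) n (A : 'M[R]_n) : Prop :=
  exists (s : R) (C : 'M[R]_n),
    [/\ nonneg_mx C, A = s%:M - C & spec_rad_lt C s].

(* reducible: permutationally similar to [[B,0],[C,D]] with B, D square
   (nontrivial blocks), or n = 1 and A = 0 *)
Definition reducible (R : ringType) n (A : 'M[R]_n) : Prop :=
  (n = 1%N /\ A = 0) \/
  exists (s : 'S_n) (k : nat), [/\ (0 < k)%N, (k < n)%N &
    forall i j : 'I_n, (i < k)%N -> (k <= j)%N ->
      (perm_mx s *m A *m (perm_mx s)^T) i j = 0].

Definition irreducible_mx (R : ringType) n (A : 'M[R]_n) : Prop :=
  ~ reducible A.

Definition Psharp (R : realFieldType) n (M : 'M[R]_n) : Prop :=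
  forall x : 'cV[R]_n, (exists y : 'cV[R]_n, x = M *m y) ->
    (forall i, x i 0 * (M *m x) i 0 <= 0) -> x = 0.

Definition border (R : ringType) n (A : 'M[R]_n) (u : 'cV[R]_n) (a : R)
  : 'M[R]_(n + 1) :=
  block_mx A u u^T a%:M.

From mathcomp Require Import all_boot all_order all_algebra all_fingroup.
From mathcomp Require Import complex.
Set Implicit Arguments. Unset Strict Implicit.
Unset Printing Implicit Defensive.
Import Order.TTheory GRing.Theory Num.Theory.
Local Open Scope ring_scope.
Local Open Scope sesquilinear_scope.

(* A symmetric invertible M-matrix A is positive definite, and the bordered
   matrix B = [[A, u], [u^T, u^T A^-1 u]] is the congruence L A L^T with
   L = [[I], [u^T A^-1]].  Any congruence B = L A L^T of a positive definite
   A is a P#-matrix: if x_i (Bx)_i <= 0 for all i then x^T B x <= 0, so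
   z = L^T x is zero; if moreover x = B y then x^T x = y^T L A^T z = 0.
   Positive definiteness is obtained from the spectral theorem for the
   hermitian complexification of A: writing A = sI - C with C >= 0 and
   rho(C) < s, every (real) eigenvalue lam of A gives the eigenvalue s - lam
   of C, so |s - lam| < s forces lam > 0.
   The file first proves the spectral facts about normal complex matrices,
   then positivity for symmetric M-matrices, then the congruence argument,
   and finally the theorem. *)

Lemma spectral_row_eigen (C : numClosedFieldType) n (M : 'M[C]_n) (i : 'I_n) :
  M \is normalmx ->
  row i (spectralmx M) *m M = spectral_diag M 0 i *: row i (spectralmx M).
Proof.
move=> /orthomx_spectralP {2}->.
rewrite !mulmxA -!row_mul mulmxV ?spectral_unit // mul1mx.
by rewrite row_mul row_diag_mx -scalemxAl -rowE.
Qed.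

Lemma spectral_row_neq0 (C : numClosedFieldType) n (M : 'M[C]_n) (i : 'I_n) :
  row i (spectralmx M) != 0.
Proof.
apply/eqP => Pi0; have := congr1 (mulmx^~ (invmx (spectralmx M))) Pi0.
rewrite /= rowE mulmxK ?spectral_unit // mul0mx => /rowP/(_ i).
by rewrite !mxE !eqxx => /eqP; rewrite oner_eq0.
Qed.

(* A normal matrix with positive spectrum has a positive hermitian form:
   in the unitary basis the form is sum_j D_j |y_j|^2 with y != 0. *)
Lemma spectral_pos_form (C : numClosedFieldType) n (M : 'M[C]_n) :
  M \is normalmx -> (forall i, 0 < spectral_diag M 0 i) ->
  forall v : 'rV_n, v != 0 -> 0 < (v *m M *m v^t*) 0 0.
Proof.
move=> /orthomx_spectralP Meq Dpos v v0.
set P := spectralmx M in Meq; set D := spectral_diag M in Meq Dpos.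
have Punitary : P \is unitarymx := spectral_unitarymx M.
set y := v *m P^t*.
have yC : y^t* = P *m v^t* by rewrite trmx_mul map_mxM trmxCK.
have formE : (v *m M *m v^t*) 0 0 = \sum_j D 0 j * (y 0 j * (y 0 j)^*).
  rewrite Meq invmx_unitary // !mulmxA -/y -mulmxA -yC mxE.
  by apply: eq_bigr => j _; rewrite mul_mx_diag !mxE mulrAC mulrC mulrA.
have [j yj] : exists j, y 0 j != 0.
  apply/existsP; apply: contraNT v0; rewrite negb_exists => /forallP y0.
  have -> : v = y *m P by rewrite /y -invmx_unitary // mulmxKV ?spectral_unit.
  have -> : y = 0 by apply/rowP => k; rewrite [RHS]mxE; apply/eqP/negPn/y0.
  by rewrite mul0mx.
rewrite formE (bigD1 j) //= ltr_wpDr ?sumr_ge0 // => [k _|].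
  by rewrite mulr_ge0 ?mul_conjC_ge0 ?ltW.
by rewrite mulr_gt0 ?mul_conjC_gt0.
Qed.

Definition posdef (R : numDomainType) n (A : 'M[R]_n) : Prop :=
  forall v : 'rV_n, v != 0 -> 0 < (v *m A *m v^T) 0 0.

Section RealSymmetricMmatrix.
Variable R : rcfType.
Local Notation toC := (map_mx (real_complex R)).

Lemma realsym_hermitian n (A : 'M[R]_n) : A^T = A -> toC A \is hermsymmx.
Proof.
move=> symA; apply: realsym_hermsym.
  apply/is_hermitianmxP; rewrite expr0 scale1r map_mx_id //.
  by apply/matrixP => i j; rewrite !mxE -[in LHS]symA mxE.
apply/forallP => i; apply/forallP => j; rewrite mxE.
by apply/complex_realP; eexists.
Qed.

(* Real eigenvalues of an invertible M-matrix sI - C are positive, since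
   s - lam is an eigenvalue of C and hence |s - lam| < s. *)
Lemma Mmatrix_real_eigen_pos n (A : 'M[R]_n) (lam : complex R) :
  invertible_Mmatrix A -> lam \is Num.real -> eigenvalue (toC A) lam ->
  0 < lam.
Proof.
move=> [s [C [_ AE rhoC]]] lam_real /eigenvalueP [v vA v0].
have sC_real : (s%:C)%C \is Num.real by apply/complex_realP; eexists.
have : ceigen C ((s%:C)%C - lam).
  rewrite /ceigen (map_char_poly (real_complex R)) -eigenvalue_root_char.
  apply/eigenvalueP; exists v => //.
  have -> : toC C = (s%:C)%C%:M - toC A.
    by rewrite AE map_mxB /= map_scalar_mx opprB addrC subrK.
  by rewrite mulmxBr vA mul_mx_scalar scalerBl.
move/rhoC => norm_lt_s; rewrite real_ltNge ?real0 //; apply/negP => lam_le0.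
suff : (s%:C)%C < (s%:C)%C by rewrite ltxx.
apply: le_lt_trans norm_lt_s.
apply: le_trans (real_ler_norm (rpredB sC_real lam_real)).
by rewrite lerDl oppr_ge0.
Qed.

Lemma symMmatrix_spectral_pos n (A : 'M[R]_n) :
  A^T = A -> invertible_Mmatrix A -> forall i, 0 < spectral_diag (toC A) 0 i.
Proof.
move=> symA MA i; have hermA := realsym_hermitian symA.
apply: (Mmatrix_real_eigen_pos MA).
  by have /mxOverP := hermitian_spectral_diag_real hermA; apply.
apply/eigenvalueP; exists (row i (spectralmx (toC A))).
  by rewrite spectral_row_eigen ?hermitian_normalmx.
exact: spectral_row_neq0.
Qed.

(* Hence a symmetric invertible M-matrix is positive definite: the real
   form is the restriction of the complex hermitian one. *)
Lemma symMmatrix_posdef n (A : 'M[R]_n) :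
  A^T = A -> invertible_Mmatrix A -> posdef A.
Proof.
move=> symA MA v v0.
have vC_neq0 : toC v != 0 by rewrite map_mx_eq0.
have vC_adj : (toC v)^t* = toC v^T.
  by apply/matrixP => i j; rewrite !mxE; apply/CrealP/complex_realP; eexists.
have := spectral_pos_form (hermitian_normalmx (realsym_hermitian symA))
          (symMmatrix_spectral_pos symA MA) vC_neq0.
by rewrite vC_adj -!map_mxM mxE -[0]/((0 : R)%:C)%C ltcR.
Qed.
End RealSymmetricMmatrix.

(* A positive definite matrix has no nonzero left kernel vector. *)
Lemma posdef_unitmx (R : realFieldType) n (A : 'M[R]_n) :
  posdef A -> A \in unitmx.
Proof.
move=> pdA; rewrite unitmxE unitfE; apply/negP => /det0P [v v0 vA].
by have := pdA v v0; rewrite vA mul0mx mxE ltxx.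
Qed.

(* Bordering a symmetric invertible A by u and the corner u^T A^-1 u (so that
   the Schur complement vanishes) yields the congruence L A L^T with
   L = [[I], [u^T A^-1]]. *)
Lemma border_congruence (R : comUnitRingType) n (A : 'M[R]_n) (u : 'cV_n) :
  A^T = A -> A \in unitmx ->
  let L := col_mx 1%:M (u^T *m invmx A) in
  border A u ((u^T *m invmx A *m u) 0 0) = L *m A *m L^T.
Proof.
move=> symA unitA L.
rewrite /L tr_col_mx trmx_mul trmxK trmx_inv symA trmx1 mul_col_mx mul1mx.
rewrite mulmxKV // mul_col_row !mulmx1 mulKVmx // /border -mx11_scalar.
by rewrite mulmxA.
Qed.

Lemma real_norm_eq0 (R : realDomainType) n (x : 'cV[R]_n) :
  (x^T *m x) 0 0 = 0 -> x = 0.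
Proof.
rewrite mxE => /psumr_eq0P sq0; apply/matrixP => i j; rewrite ord1 [RHS]mxE.
have /sq0/(_ i isT)/eqP : forall k, true -> 0 <= x^T 0 k * x k 0.
  by move=> k _; rewrite mxE -expr2 sqr_ge0.
by rewrite mxE mulf_eq0 orbb => /eqP.
Qed.

Lemma congruence_Psharp (R : realFieldType) m n (A : 'M[R]_n) (L : 'M_(m, n)) :
  posdef A -> Psharp (L *m A *m L^T).
Proof.
move=> pdA x [y xE] sign_x; set z := L^T *m x.
have form_le0 : (z^T *m A *m z) 0 0 <= 0.
  have -> : z^T *m A *m z = x^T *m (L *m A *m L^T *m x).
    by rewrite /z trmx_mul trmxK !mulmxA.
  by rewrite mxE sumr_le0 // => i _; rewrite mxE; exact: sign_x.
have z0 : z = 0.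
  apply/eqP; apply: contraT => z_neq0.
  have := pdA z^T; rewrite trmx_eq0 trmxK => /(_ z_neq0).
  by rewrite ltNge form_le0.
apply: real_norm_eq0.
by rewrite {1}xE !trmx_mul -!mulmxA -/z z0 !mulmx0 mxE.
Qed.

Theorem mainTheorem4 (R : rcfType) (n : nat) (A : 'M[R]_n) (u : 'cV[R]_n) :
  A^T = A -> irreducible_mx A -> invertible_Mmatrix A ->
  u != 0 -> (forall i, u i 0 <= 0) ->
  Psharp (border A u ((u^T *m invmx A *m u) 0 0)).
Proof.
move=> symA _ MA _ _.
have pdA : posdef A := symMmatrix_posdef symA MA.
rewrite border_congruence ?posdef_unitmx //.
exact: congruence_Psharp.
Qed.
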